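(* Let $G$ be a Garside group, $a\in G$, $a'\in C^{sum}(a)$, and let $\Gamma$ be the minimal summit graph of $a$. Let $p:\pi_1(\Gamma,a')\to G$ be the group homomorphism sending a loop based at $a'$, given as a sequence of arrows $\alpha_1^{\epsilon_1}\cdots\alpha_r^{\epsilon_r}$ ($\epsilon_j=\pm1$, an arrow traversed against its direction having exponent $-1$), to the element $s(\alpha_1)^{\epsilon_1}\cdots s(\alpha_r)^{\epsilon_r}\in G$, where $s(\alpha)$ is the label of $\alpha$. Then the image of $p$ is exactly the centralizer $Z(a')=\{c\in G: ca'=a'c\}$.
   Context: A Garside monoid $M$ is an atomic, left and right cancellative monoid with left and right lcm's and gcd's for all pairs, having a Garside element $\Delta$ whose left divisors coincide with its right divisors, form a finite set and generate $M$; $G$ is its group of fractions, containing $M$. Prefix order on $G$: $a\preceq b$ iff $a^{-1}b\in M$. Simple elements are the divisors of $\Delta$ in $M$; $S$ is the set of simple elements. For $x\in G$, $\inf(x)=\max\{r:\Delta^r\preceq x\}$, $\sup(x)=\min\{r: x\preceq\Delta^r\}$. The summit class $C^{sum}(a)$ is the (finite, nonempty) set of conjugates of $a$ with maximal $\inf$ and minimal $\sup$ among all conjugates of $a$. For $v\in C^{sum}(a)$, $S^{sum}_v$ is the set of $\preceq$-minimal elements of $\{s\in S\setminus\{1\}: s^{-1}vs\in C^{sum}(a)\}$. The minimal summit graph $\Gamma$ of $a$ is the finite directed graph whose vertices are the elements of $C^{sum}(a)$, with an arrow from $v$ to $w$ labelled $s$ for each $s\in S^{sum}_v$ such that $s^{-1}vs=w$.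 The fundamental group $\pi_1(\Gamma,a')$ is that of the underlying (undirected) graph. *)

From Stdlib Require Import ZArith List.
Import ListNotations.
Open Scope Z_scope.

Record group := Group {
  carrier :> Type;
  gmul : carrier -> carrier -> carrier;
  gone : carrier;
  ginv : carrier -> carrier;
  gmulA : forall x y z, gmul x (gmul y z) = gmul (gmul x y) z;
  gmul1l : forall x, gmul gone x = x;
  gmul1r : forall x, gmul x gone = x;
  gmulVl : forall x, gmul (ginv x) x = gone;
  gmulVr : forall x, gmul x (ginv x) = gone
}.

Arguments gmul {g}.
Arguments gone {g}.
Arguments ginv {g}.

Section GarsideDefs.
Variable G : group.
Variable M : G -> Prop.
Variable Delta : G.

Definition gprod (l : list G) : G := fold_right gmul gone l.

Fixpoint gpow (g : G) (n : nat) : G :=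
  match n with O => gone | S n' => gmul g (gpow g n') end.
Definition gzpow (g : G) (z : Z) : G :=
  match z with
  | Z0 => gone
  | Zpos p => gpow g (Pos.to_nat p)
  | Zneg p => ginv (gpow g (Pos.to_nat p))
  end.

Definition ldivM (x y : G) : Prop := exists c, M c /\ y = gmul x c.
Definition rdivM (x y : G) : Prop := exists c, M c /\ y = gmul c x.

(** Cancellativity is automatic since M lies in a group. *)
Definition is_garside : Prop :=
  M gone /\ (forall x y, M x -> M y -> M (gmul x y)) /\
  (forall g : G, exists x y, M x /\ M y /\ g = gmul x (ginv y)) /\
  (forall x, M x -> exists N : nat, forall l : list G,
      (forall y, In y l -> M y /\ y <> gone) -> gprod l = x -> (length l <= N)%nat) /\
  (forall x y, M x -> M y -> exists m, M m /\ ldivM x m /\ ldivM y m /\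
      forall n, M n -> ldivM x n -> ldivM y n -> ldivM m n) /\
  (forall x y, M x -> M y -> exists d, M d /\ ldivM d x /\ ldivM d y /\
      forall n, M n -> ldivM n x -> ldivM n y -> ldivM n d) /\
  (forall x y, M x -> M y -> exists m, M m /\ rdivM x m /\ rdivM y m /\
      forall n, M n -> rdivM x n -> rdivM y n -> rdivM m n) /\
  (forall x y, M x -> M y -> exists d, M d /\ rdivM d x /\ rdivM d y /\
      forall n, M n -> rdivM n x -> rdivM n y -> rdivM n d) /\
  M Delta /\
  (forall x, M x -> (ldivM x Delta <-> rdivM x Delta)) /\
  (exists L : list G, forall x, M x -> ldivM x Delta -> In x L) /\
  (forall x, M x -> exists l : list G,
      (forall y, In y l -> M y /\ ldivM y Delta) /\ x = gprod l).

Definition prec (x y : G) : Prop := M (gmul (ginv x) y).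

Definition is_inf (x : G) (r : Z) : Prop :=
  prec (gzpow Delta r) x /\ forall r', prec (gzpow Delta r') x -> r' <= r.
Definition is_sup (x : G) (r : Z) : Prop :=
  prec x (gzpow Delta r) /\ forall r', prec x (gzpow Delta r') -> r <= r'.

Definition gconj (c x : G) : G := gmul (gmul (ginv c) x) c.
Definition conjugate (a v : G) : Prop := exists c, v = gconj c a.

Definition Csum (a v : G) : Prop :=
  conjugate a v /\
  (exists rv, is_inf v rv /\
     forall w rw, conjugate a w -> is_inf w rw -> rw <= rv) /\
  (exists sv, is_sup v sv /\
     forall w sw, conjugate a w -> is_sup w sw -> sv <= sw).

Definition simple (s : G) : Prop := M s /\ prec s Delta.

Definition Ssum_cand (a v s : G) : Prop :=
  simple s /\ s <> gone /\ Csum a (gconj s v).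
Definition Ssum (a v s : G) : Prop :=
  Ssum_cand a v s /\ forall t, Ssum_cand a v t -> prec t s -> t = s.

(** minimal summit graph: vertices Csum a; one arrow v -> s^-1 v s labelled s
    for each s in Ssum a v.  An arrow is thus identified with the pair (v,s). *)
Definition arrow (a v s : G) : Prop := Csum a v /\ Ssum a v s.

(** walks in the underlying undirected graph: a list of (v, s, eps), where
    (v,s) is an arrow and eps = true means it is traversed forwards
    (from v to s^-1 v s), eps = false backwards. *)
Fixpoint walk (a x : G) (l : list (G * G * bool)) (y : G) : Prop :=
  match l with
  | [] => x = y
  | (v, s, eps) :: l' =>
      arrow a v s /\
      if eps then x = v /\ walk a (gconj s v) l' y
      else x = gconj s v /\ walk a v l' y
  end.

Definition label_prod (l : list (G * G * bool)) : G :=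
  fold_right (fun (e : G * G * bool) (acc : G) => match e with
                           | (v, s, eps) => gmul (if eps then s else ginv s) acc
                           end) gone l.

Definition image_p (a a' c : G) : Prop :=
  exists l, walk a a' l a' /\ c = label_prod l.

Definition centralizer (a' c : G) : Prop := gmul c a' = gmul a' c.

End GarsideDefs.

(* Write a conjugator c between summit elements as Delta^-n * m with m in M.  Conjugation by
   powers of Delta preserves the summit class, and the class is convex: if v and v^x are summit
   elements with x in M, so is v^(x /\ Delta).  Hence a nontrivial positive conjugator has a
   nontrivial simple prefix keeping v in the class, and a prefix-minimal one is the label of an
   arrow of Gamma.  Peeling such labels off (atomicity makes this terminate) turns m, and likewise
   Delta^n, into paths of Gamma; composing the reverse of the second with the first gives a path
   from v to v^c with label product c.  For c centralizing a' this is a loop, and conversely every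
   loop's label product conjugates a' to itself. *)

From Stdlib Require Import ZArith List Lia Classical.
Import ListNotations.

Declare Scope group_scope.
Local Infix "*" := gmul : group_scope.
Local Notation "x ^-1" := (ginv x) (at level 3, format "x ^-1") : group_scope.
Local Open Scope group_scope.

Arguments gmulA {g}. Arguments gmul1l {g}. Arguments gmul1r {g}.
Arguments gmulVl {g}. Arguments gmulVr {g}.

Section GroupTheory.
Variable G : group.
Implicit Types x y g : G.

Lemma gmulKl x y : x^-1 * (x * y) = y.
Proof. now rewrite gmulA, gmulVl, gmul1l. Qed.

Lemma gmulKr x y : x * (x^-1 * y) = y.
Proof. now rewrite gmulA, gmulVr, gmul1l. Qed.

Lemma ginv_unique x y : x * y = gone -> y = x^-1.
Proof. intro E. now rewrite <- (gmulKl x y), E, gmul1r. Qed.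

Lemma ginv_mul x y : (x * y)^-1 = y^-1 * x^-1.
Proof.
  symmetry. apply ginv_unique.
  now rewrite <- gmulA, (gmulA y), gmulVr, gmul1l, gmulVr.
Qed.

Lemma ginv_ginv x : x^-1^-1 = x.
Proof. symmetry. apply ginv_unique, gmulVl. Qed.

Lemma ginv_one : (@gone G)^-1 = gone.
Proof. symmetry. apply ginv_unique, gmul1l. Qed.

Lemma gconj_mul x y v : gconj G (x * y) v = gconj G y (gconj G x v).
Proof. unfold gconj. now rewrite ginv_mul, !gmulA. Qed.

Lemma gconj_mul_r c x y : gconj G c (x * y) = gconj G c x * gconj G c y.
Proof. unfold gconj. now rewrite <- !gmulA, gmulKr. Qed.

Lemma gconj_one v : gconj G gone v = v.
Proof. unfold gconj. now rewrite ginv_one, gmul1l, gmul1r. Qed.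

Lemma gconj_ginv c v : gconj G c v^-1 = (gconj G c v)^-1.
Proof. unfold gconj. now rewrite !ginv_mul, ginv_ginv, <- !gmulA. Qed.

Lemma gpow_succ_r g n : gpow G g (S n) = gpow G g n * g.
Proof.
  induction n as [|n IH]; [simpl; now rewrite gmul1l, gmul1r|].
  change (g * gpow G g (S n) = gpow G g (S n) * g).
  rewrite IH at 1. simpl. now rewrite gmulA.
Qed.

Lemma gzpow_succ g z : gzpow G g (Z.succ z) = gzpow G g z * g.
Proof.
  destruct z as [|p|p].
  - simpl. now rewrite gmul1r, gmul1l.
  - replace (Z.succ (Zpos p)) with (Zpos (Pos.succ p)) by lia.
    simpl. now rewrite Pos2Nat.inj_succ, gpow_succ_r.
  - destruct (Pos.succ_pred_or p) as [->|<-].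
    + simpl. now rewrite gmul1r, gmulVl.
    + replace (Z.succ (Zneg (Pos.succ (Pos.pred p)))) with (Zneg (Pos.pred p)) by lia.
      simpl. rewrite Pos2Nat.inj_succ. simpl. now rewrite ginv_mul, <- gmulA, gmulVl, gmul1r.
Qed.

Lemma gzpow_pred g z : gzpow G g (Z.pred z) = gzpow G g z * g^-1.
Proof.
  rewrite <- (Z.succ_pred z) at 2.
  now rewrite gzpow_succ, <- gmulA, gmulVr, gmul1r.
Qed.

Lemma gzpow_add g r s : gzpow G g (r + s) = gzpow G g r * gzpow G g s.
Proof.
  induction s as [|s IH|s IH] using Z.peano_ind.
  - rewrite Z.add_0_r. simpl. now rewrite gmul1r.
  - now rewrite Z.add_succ_r, !gzpow_succ, IH, gmulA.
  - now rewrite Z.add_pred_r, !gzpow_pred, IH, gmulA.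
Qed.

Lemma gzpow_comm g r s : gzpow G g r * gzpow G g s = gzpow G g s * gzpow G g r.
Proof. now rewrite <- !gzpow_add, Z.add_comm. Qed.

Lemma gzpow_opp g z : gzpow G g (- z) = (gzpow G g z)^-1.
Proof. destruct z; simpl; now rewrite ?ginv_one, ?ginv_ginv. Qed.

Lemma gzpow_one g : gzpow G g 1 = g.
Proof. simpl. now rewrite gmul1r. Qed.

Lemma gconj_gzpow g z r : gconj G (gzpow G g z) (gzpow G g r) = gzpow G g r.
Proof. unfold gconj. now rewrite <- gmulA, gzpow_comm, gmulKl. Qed.

Lemma gzpow_of_nat g n : gzpow G g (Z.of_nat n) = gpow G g n.
Proof. destruct n; simpl; [reflexivity|]. now rewrite SuccNat2Pos.id_succ. Qed.

End GroupTheory.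

Arguments gmulKl {G}. Arguments gmulKr {G}.
Arguments ginv_unique {G}. Arguments ginv_mul {G}. Arguments ginv_ginv {G}.
Arguments ginv_one {G}.

Ltac gnorm := unfold gconj in *;
  repeat (progress rewrite ?ginv_mul, ?ginv_ginv, ?ginv_one, ?gmul1l, ?gmul1r,
    <- ?gmulA, ?gmulKl, ?gmulKr, ?gmulVl, ?gmulVr).

Lemma Z_bounded_max (Q : Z -> Prop) a b :
  Q a -> (forall r, Q r -> (r <= b)%Z) -> exists m, Q m /\ forall r, Q r -> (r <= m)%Z.
Proof.
  intros Qa Hb.
  assert (H : forall k a, (b - a <= Z.of_nat k)%Z -> Q a ->
            exists m, Q m /\ forall r, Q r -> (r <= m)%Z).
  { induction k as [|k IH]; intros a0 Hk Qa0.
    - exists a0. split; [exact Qa0|]. intros r Qr. specialize (Hb r Qr). lia.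
    - destruct (classic (exists r, Q r /\ (a0 < r)%Z)) as [[r [Qr Hlt]]|Hno].
      + apply (IH r); [lia | exact Qr].
      + exists a0. split; [exact Qa0|]. intros r Qr.
        apply Z.nlt_ge. intro Hlt. apply Hno. now exists r. }
  apply (H (Z.to_nat (b - a)) a); [lia | exact Qa].
Qed.

Lemma Z_bounded_min (Q : Z -> Prop) a b :
  Q a -> (forall r, Q r -> (b <= r)%Z) -> exists m, Q m /\ forall r, Q r -> (m <= r)%Z.
Proof.
  intros Qa Hb.
  destruct (Z_bounded_max (fun r => Q (- r)%Z) (- a) (- b)) as [m [Qm Hmax]].
  - now rewrite Z.opp_involutive.
  - intros r Qr. specialize (Hb _ Qr). lia.
  - exists (- m)%Z. split; [exact Qm|]. intros r Qr.
    specialize (Hmax (- r)%Z). rewrite Z.opp_involutive in Hmax. specialize (Hmax Qr). lia.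
Qed.

Lemma finite_minimal_exists {A : Type} (R : A -> A -> Prop)
  (R_trans : forall x y z, R x y -> R y z -> R x z)
  (R_antisym : forall x y, R x y -> R y x -> x = y)
  (l : list A) (C : A -> Prop) :
  (forall t, C t -> In t l) -> (exists t, C t) ->
  exists t, C t /\ forall t', C t' -> R t' t -> t' = t.
Proof.
  revert C. induction l as [|h l IH]; intros C Cl [t0 Ct0]; [destruct (Cl t0 Ct0)|].
  destruct (classic (exists t, C t /\ t <> h)) as [Hne|Hno].
  - destruct (IH (fun t => C t /\ t <> h)) as [t [[Ct Nth] Hmin]]; [|exact Hne|].
    { intros t [Ct Nth]. destruct (Cl t Ct); [congruence | assumption]. }
    destruct (classic (C h /\ R h t)) as [[Ch Rht]|Hnot_h].
    + (* [h] is minimal: anything below [h] is also below [t] *)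
      exists h. split; [exact Ch|]. intros t' Ct' Rt'h.
      apply NNPP. intro Nt'h.
      assert (t' = t) as -> by (apply Hmin; [split | eapply R_trans]; eauto).
      apply Nth, R_antisym; assumption.
    + exists t. split; [exact Ct|]. intros t' Ct' Rt't.
      destruct (classic (t' = h)) as [->|Nt'h]; [tauto|].
      apply Hmin; [split|]; assumption.
  - exists t0. split; [exact Ct0|]. intros t' Ct' _.
    assert (E : forall t, C t -> t = h) by (intros t Ct; apply NNPP; eauto).
    now rewrite (E t' Ct'), (E t0 Ct0).
Qed.

Section Walks.
Variables (G : group) (M : G -> Prop) (Delta a : G).
Local Notation walk := (walk G M Delta a).
Local Notation label_prod := (label_prod G).

Lemma walk_conjugates l : forall x y, walk x l y -> x * label_prod l = label_prod l * y.
Proof.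
  induction l as [|[[v s] []] l IH]; simpl; intros x y Hw.
  - subst. now rewrite gmul1l, gmul1r.
  - destruct Hw as [_ [-> Hw]]. rewrite <- gmulA, <- (IH _ _ Hw). gnorm. reflexivity.
  - destruct Hw as [_ [-> Hw]]. rewrite <- gmulA, <- (IH _ _ Hw). gnorm. reflexivity.
Qed.

Lemma walk_cat l1 l2 x y z : walk x l1 y -> walk y l2 z -> walk x (l1 ++ l2) z.
Proof.
  revert x. induction l1 as [|[[v s] eps] l1 IH]; simpl; intros x H1 H2.
  - now subst.
  - destruct H1 as [Ha H1]. split; [exact Ha|].
    destruct eps; destruct H1 as [-> H1]; eauto.
Qed.

Lemma label_prod_cat l1 l2 : label_prod (l1 ++ l2) = label_prod l1 * label_prod l2.
Proof.
  induction l1 as [|[[v s] eps] l1 IH]; simpl; [now rewrite gmul1l|].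
  now rewrite IH, gmulA.
Qed.

Lemma walk_rev l : forall x y, walk x l y ->
  exists l', walk y l' x /\ label_prod l' = (label_prod l)^-1.
Proof.
  induction l as [|[[v s] eps] l IH]; simpl; intros x y Hw.
  - subst. exists []. simpl. now rewrite ginv_one.
  - destruct Hw as [Ha Hw].
    destruct eps; destruct Hw as [-> Hw]; destruct (IH _ _ Hw) as [l' [Hw' Hl']].
    + exists (l' ++ [(v, s, false)]). split.
      * eapply walk_cat; [exact Hw'|]. simpl. auto.
      * rewrite label_prod_cat, Hl'. simpl. gnorm. reflexivity.
    + exists (l' ++ [(v, s, true)]). split.
      * eapply walk_cat; [exact Hw'|]. simpl. auto.
      * rewrite label_prod_cat, Hl'. simpl. gnorm. reflexivity.
Qed.

End Walks.

Lemma Delta_nontrivial (G : group) (M : G -> Prop) (Delta v : G) r :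
  is_inf G M Delta v r -> Delta <> gone.
Proof.
  intros [Hr Hmax] E.
  assert (Hz : forall z, gzpow G Delta z = gone).
  { assert (Hpow : forall n, gpow G gone n = gone).
    { induction n as [|n IH]; simpl; [|rewrite IH, gmul1l]; reflexivity. }
    intro z. rewrite E. destruct z; simpl; now rewrite ?Hpow, ?ginv_one. }
  assert (r + 1 <= r)%Z by (apply Hmax; rewrite Hz, <- (Hz r); exact Hr). lia.
Qed.

Lemma conjugate_gconj (G : group) (a v h : G) :
  conjugate G a v -> conjugate G a (gconj G h v).
Proof. intros [c ->]. exists (c * h). now rewrite gconj_mul. Qed.

Section Garside.
Variables (G : group) (M : G -> Prop) (Delta : G).
Local Notation P := (prec G M).
Local Notation ldiv := (ldivM G M).
Local Notation Dz := (gzpow G Delta).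
Local Notation Dn := (gpow G Delta).

Definition atom_bound (x : G) (n : nat) : Prop :=
  forall l : list G, (forall y, In y l -> M y /\ y <> gone) -> gprod G l = x -> (length l <= n)%nat.

Definition gcdM (d x y : G) : Prop :=
  M d /\ P d x /\ P d y /\ forall n, M n -> P n x -> P n y -> P n d.

Hypothesis HM1 : M gone.
Hypothesis HMmul : forall x y, M x -> M y -> M (x * y).
Hypothesis Hfrac : forall g : G, exists x y, M x /\ M y /\ g = x * y^-1.
Hypothesis Hatom : forall x, M x -> exists n, atom_bound x n.
Hypothesis Hgcd : forall x y, M x -> M y -> exists d, M d /\ ldiv d x /\ ldiv d y /\
  forall n, M n -> ldiv n x -> ldiv n y -> ldiv n d.
Hypothesis HD : M Delta.
Hypothesis Hlr : forall x, M x -> (ldiv x Delta <-> rdivM G M x Delta).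
Hypothesis HL : exists L : list G, forall x, M x -> ldiv x Delta -> In x L.
Hypothesis Hgen : forall x, M x -> exists l : list G,
  (forall y, In y l -> M y /\ ldiv y Delta) /\ x = gprod G l.
Hypothesis HDnt : Delta <> gone.

Lemma ldiv_prec x y : ldiv x y <-> P x y.
Proof.
  unfold ldivM, prec. split.
  - intros [c [Mc ->]]. now rewrite gmulKl.
  - intro H. exists (x^-1 * y). split; [exact H | now rewrite gmulKr].
Qed.

Lemma prec_trans x y z : P x y -> P y z -> P x z.
Proof.
  unfold prec. intros Hxy Hyz.
  replace (x^-1 * z) with ((x^-1 * y) * (y^-1 * z)) by (gnorm; reflexivity). auto.
Qed.

Lemma prec_mul_l h x y : P (h * x) (h * y) <-> P x y.
Proof. unfold prec. now rewrite ginv_mul, <- gmulA, gmulKl. Qed.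

Lemma gcd_exists x y : M x -> M y -> exists d, gcdM d x y.
Proof.
  intros Mx My. destruct (Hgcd x y Mx My) as [d [Md [Hdx [Hdy Hd]]]].
  exists d. rewrite ldiv_prec in Hdx, Hdy.
  repeat split; auto. intros n Mn Hnx Hny. apply ldiv_prec, Hd; now try apply ldiv_prec.
Qed.

Lemma M_gprod l : (forall y, In y l -> M y) -> M (gprod G l).
Proof. induction l as [|y l IH]; simpl; intros Hl; auto. Qed.

Lemma M_gpow n : M (Dn n).
Proof. induction n; simpl; auto. Qed.

(* Atomicity forbids [x, x^-1, x, x^-1, ...] from being arbitrarily long factorizations of 1. *)
Lemma M_unit_trivial x : M x -> M x^-1 -> x = gone.
Proof.
  intros Mx Mix. apply NNPP. intro Hx.
  assert (Hix : x^-1 <> gone) by (intro E; apply Hx; now rewrite <- (ginv_ginv x), E, ginv_one).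
  destruct (Hatom gone HM1) as [N HN].
  assert (Hpairs : forall n, exists l, (forall y, In y l -> M y /\ y <> gone) /\
                     gprod G l = gone /\ length l = (2 * n)%nat).
  { induction n as [|n [l [Hl [El Ll]]]]; [exists []; simpl; tauto|].
    exists (x :: x^-1 :: l). simpl. rewrite El, gmul1r, gmulVr.
    split; [intros y [<-|[<-|Hy]]; auto | split; [reflexivity | lia]]. }
  destruct (Hpairs (S N)) as [l [Hl [El Ll]]]. specialize (HN l Hl El). lia.
Qed.

Lemma prec_antisym x y : P x y -> P y x -> x = y.
Proof.
  unfold prec. intros Hxy Hyx.
  assert (E : x^-1 * y = gone).
  { apply M_unit_trivial; [exact Hxy|]. now rewrite ginv_mul, ginv_ginv. }
  now rewrite <- (gmulKr x y), E, gmul1r.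
Qed.

Lemma M_gconj_of_simples h :
  (forall s, M s -> ldiv s Delta -> M (gconj G h s)) -> forall y, M y -> M (gconj G h y).
Proof.
  intros Hs y My. destruct (Hgen y My) as [l [Hl ->]]. clear My.
  induction l as [|s l IH]; simpl; [unfold gconj; now rewrite gmul1r, gmulVl|].
  rewrite gconj_mul_r. apply HMmul; [apply Hs; apply Hl; now left|].
  apply IH. intros; apply Hl; now right.
Qed.

Lemma M_gconj_Delta y : M y -> M (gconj G Delta y).
Proof.
  apply M_gconj_of_simples. intros s Ms [t [Mt Et]].
  destruct (proj2 (Hlr t Mt) (ex_intro _ s (conj Ms Et))) as [u [Mu Eu]].
  replace (gconj G Delta s) with u; [exact Mu|].
  unfold gconj. rewrite Eu at 2. rewrite Et. gnorm. reflexivity.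
Qed.

Lemma M_gconj_Delta_inv y : M y -> M (gconj G Delta^-1 y).
Proof.
  apply M_gconj_of_simples. intros s Ms Hs.
  destruct (proj1 (Hlr s Ms) Hs) as [t [Mt Et]].
  destruct (proj1 (Hlr t Mt) (ex_intro _ s (conj Ms Et))) as [u [Mu Eu]].
  replace (gconj G Delta^-1 s) with u; [exact Mu|].
  unfold gconj. rewrite Eu at 1. rewrite Et. gnorm. reflexivity.
Qed.

Lemma M_gconj_gzpow z y : M y -> M (gconj G (Dz z) y).
Proof.
  revert y. induction z as [|z IH|z IH] using Z.peano_ind; intros y My.
  - simpl. now rewrite gconj_one.
  - rewrite gzpow_succ, gconj_mul. now apply M_gconj_Delta, IH.
  - rewrite gzpow_pred, gconj_mul. now apply M_gconj_Delta_inv, IH.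
Qed.

Lemma prec_gconj_gzpow z x y : P x y -> P (gconj G (Dz z) x) (gconj G (Dz z) y).
Proof.
  unfold prec. intro H.
  replace ((gconj G (Dz z) x)^-1 * gconj G (Dz z) y) with (gconj G (Dz z) (x^-1 * y))
    by (gnorm; reflexivity).
  now apply M_gconj_gzpow.
Qed.

Lemma prec_gzpow_ginv w s : P w (Dz s) <-> P (Dz (- s)) w^-1.
Proof.
  unfold prec. rewrite gzpow_opp, ginv_ginv. split; intro H.
  - replace (Dz s * w^-1) with (gconj G (Dz (- s)) (w^-1 * Dz s)).
    + now apply M_gconj_gzpow.
    + rewrite gzpow_opp. gnorm. reflexivity.
  - replace (w^-1 * Dz s) with (gconj G (Dz s) (Dz s * w^-1)).
    + now apply M_gconj_gzpow.
    + gnorm. reflexivity.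
Qed.

(* Each inverted simple [s^-1] is absorbed by one factor [Delta], as [Delta * s^-1] is simple. *)
Lemma M_gpow_mul_inv_gprod l :
  (forall y, In y l -> M y /\ ldiv y Delta) -> M (Dn (length l) * (gprod G l)^-1).
Proof.
  induction l as [|s l IH]; simpl; intros Hl; [now rewrite ginv_one, gmul1r|].
  destruct (Hl s (or_introl eq_refl)) as [Ms Hs].
  destruct (proj1 (Hlr s Ms) Hs) as [t [Mt Et]].
  replace (Delta * Dn (length l) * (s * gprod G l)^-1)
    with (gconj G Delta^-1 (Dn (length l) * (gprod G l)^-1) * t).
  - apply HMmul; [|exact Mt]. apply M_gconj_Delta_inv, IH. intros; apply Hl; now right.
  - rewrite Et. gnorm. reflexivity.
Qed.

Lemma Delta_power_mul_in_M g : exists n, M (Dn n * g).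
Proof.
  destruct (Hfrac g) as [x [y [Mx [My ->]]]].
  destruct (Hgen y My) as [l [Hl ->]].
  exists (length l).
  replace (Dn (length l) * (x * (gprod G l)^-1))
    with (gconj G (Dn (length l))^-1 x * (Dn (length l) * (gprod G l)^-1))
    by (gnorm; reflexivity).
  apply HMmul; [|now apply M_gpow_mul_inv_gprod].
  rewrite <- gzpow_of_nat, <- gzpow_opp. now apply M_gconj_gzpow.
Qed.

Lemma gzpow_prec_le r s : P (Dz r) (Dz s) -> (r <= s)%Z.
Proof.
  unfold prec. rewrite <- gzpow_opp, <- gzpow_add. intro H.
  apply Z.nlt_ge. intro Hlt.
  destruct (- r + s)%Z as [|p|p] eqn:E; try lia.
  simpl in H. destruct (Pos2Nat.is_succ p) as [k Hk]. rewrite Hk in H.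
  assert (E1 : Dn (S k) = gone) by (apply M_unit_trivial; [apply M_gpow | exact H]).
  simpl in E1. apply HDnt, M_unit_trivial; [exact HD|].
  rewrite <- (ginv_unique _ _ E1). apply M_gpow.
Qed.

Lemma is_inf_exists w r s : P (Dz r) w -> P w (Dz s) -> exists m, is_inf G M Delta w m.
Proof.
  intros Hr Hs. apply (Z_bounded_max _ r s Hr).
  intros r' Hr'. apply gzpow_prec_le. eapply prec_trans; eauto.
Qed.

Lemma is_sup_exists w r s : P (Dz r) w -> P w (Dz s) -> exists m, is_sup G M Delta w m.
Proof.
  intros Hr Hs. apply (Z_bounded_min _ s r Hs).
  intros s' Hs'. apply gzpow_prec_le. eapply prec_trans; eauto.
Qed.

Lemma Csum_bounds a v : Csum G M Delta a v -> exists r s, forall w, conjugate G a w ->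
  (Csum G M Delta a w <-> P (Dz r) w /\ P w (Dz s)).
Proof.
  intros [Hcv [[r [Hinf Hrmax]] [s [Hsup Hsmin]]]]. exists r, s. intros w Hcw. split.
  - intros [_ [[rw [Hrw Hrwmax]] [sw [Hsw Hswmin]]]].
    assert (rw = r) as ->
      by (apply Z.le_antisymm; [apply (Hrmax w) | apply (Hrwmax v)]; assumption).
    assert (sw = s) as ->
      by (apply Z.le_antisymm; [apply (Hswmin v) | apply (Hsmin w)]; assumption).
    exact (conj (proj1 Hrw) (proj1 Hsw)).
  - intros [Hr Hs]. split; [exact Hcw|]. split.
    + exists r. split; [split; [exact Hr|] | exact Hrmax].
      intros r' Hr'. destruct (is_inf_exists w r s Hr Hs) as [m Hm].
      pose proof (proj2 Hm r' Hr'). pose proof (Hrmax w m Hcw Hm). lia.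
    + exists s. split; [split; [exact Hs|] | exact Hsmin].
      intros s' Hs'. destruct (is_sup_exists w r s Hr Hs) as [m Hm].
      pose proof (proj2 Hm s' Hs'). pose proof (Hsmin w m Hcw Hm). lia.
Qed.

Lemma Csum_gconj_gzpow a v z : Csum G M Delta a v -> Csum G M Delta a (gconj G (Dz z) v).
Proof.
  intro Hv. destruct (Csum_bounds a v Hv) as [r [s Hb]].
  pose proof (proj1 Hv) as Hcv.
  destruct (proj1 (Hb v Hcv) Hv) as [Hr Hs].
  apply Hb; [now apply conjugate_gconj|].
  rewrite <- (gconj_gzpow G Delta z r), <- (gconj_gzpow G Delta z s).
  split; now apply prec_gconj_gzpow.
Qed.

Lemma prec_gcd d x y : M x -> M y -> gcdM d x y -> forall u, P u x -> P u y -> P u d.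
Proof.
  intros Mx My [Md [Hdx [Hdy Hd]]] u Hux Huy.
  destruct (Delta_power_mul_in_M u) as [n Hn].
  destruct (gcd_exists (Dn n * x) (Dn n * y)) as [g [_ [Hgx [Hgy Hg]]]];
    [apply HMmul; auto using M_gpow .. |].
  assert (Hpref : forall z, P (Dn n) (Dn n * z) <-> M z) by (intro z; unfold prec; now rewrite gmulKl).
  assert (Hng : P (Dn n) g) by (apply Hg; [apply M_gpow | apply Hpref.. ]; assumption).
  set (e := (Dn n)^-1 * g).
  assert (Eg : g = Dn n * e) by (unfold e; now rewrite gmulKr).
  rewrite Eg, prec_mul_l in Hgx, Hgy.
  apply prec_trans with e.
  - apply (prec_mul_l (Dn n)). rewrite <- Eg. apply Hg; [exact Hn | ..]; now apply prec_mul_l.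
  - now apply Hd.
Qed.

(* For [z] with prefix [d], the bound [Delta^r <= v^z] makes [v^-1 * d * Delta^r] a prefix of [z];
   for [z = d] this is an equivalence, so the gcd property transfers the bound to [d]. *)
Lemma inf_bound_gcd r v x y d : M x -> M y -> gcdM d x y ->
  P (Dz r) (gconj G x v) -> P (Dz r) (gconj G y v) -> P (Dz r) (gconj G d v).
Proof.
  intros Mx My Hd Hx Hy. pose proof Hd as [Md [Hdx [Hdy _]]].
  set (u := v^-1 * d * Dz r).
  assert (Key : forall z, P d z -> P (Dz r) (gconj G z v) -> P u z).
  { unfold prec. intros z Hdz Hz.
    replace (u^-1 * z) with (gconj G (Dz r) (d^-1 * z) * ((Dz r)^-1 * gconj G z v))
      by (unfold u; gnorm; reflexivity).
    apply HMmul; [now apply M_gconj_gzpow | exact Hz]. }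
  pose proof (prec_gcd d x y Mx My Hd u (Key x Hdx Hx) (Key y Hdy Hy)) as Hud.
  unfold prec in *.
  replace ((Dz r)^-1 * gconj G d v) with (u^-1 * d) by (unfold u; gnorm; reflexivity).
  exact Hud.
Qed.

Lemma sup_bound_gcd s v x y d : M x -> M y -> gcdM d x y ->
  P (gconj G x v) (Dz s) -> P (gconj G y v) (Dz s) -> P (gconj G d v) (Dz s).
Proof. rewrite !prec_gzpow_ginv, <- !gconj_ginv. apply inf_bound_gcd. Qed.

Lemma Csum_gconj_gcd_Delta a v x d : Csum G M Delta a v -> Csum G M Delta a (gconj G x v) ->
  M x -> gcdM d x Delta -> Csum G M Delta a (gconj G d v).
Proof.
  intros Hv Hxv Mx Hd. destruct (Csum_bounds a v Hv) as [r [s Hb]].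
  pose proof (proj1 Hv) as Hcv.
  assert (HDv : Csum G M Delta a (gconj G Delta v))
    by (pose proof (Csum_gconj_gzpow a v 1 Hv) as H; now rewrite gzpow_one in H).
  destruct (proj1 (Hb _ (conjugate_gconj G a v x Hcv)) Hxv) as [Hxr Hxs].
  destruct (proj1 (Hb _ (conjugate_gconj G a v Delta Hcv)) HDv) as [HDr HDs].
  apply Hb; [now apply conjugate_gconj|].
  split; [apply (inf_bound_gcd r v x Delta d) | apply (sup_bound_gcd s v x Delta d)]; assumption.
Qed.

Lemma nontrivial_simple_prefix x : M x -> x <> gone ->
  exists s, simple G M Delta s /\ s <> gone /\ P s x.
Proof.
  intros Mx Hx. destruct (Hgen x Mx) as [l [Hl ->]]. clear Mx.
  induction l as [|h l IH]; simpl in *; [congruence|].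
  destruct (Hl h (or_introl eq_refl)) as [Mh HhD].
  destruct (classic (h = gone)) as [->|Hh].
  - rewrite gmul1l in Hx. destruct (IH Hx (fun y Hy => Hl y (or_intror Hy))) as [s [Hs [Hs1 Hsl]]].
    exists s. now rewrite gmul1l.
  - exists h. split; [split; [exact Mh | now apply ldiv_prec]|]. split; [exact Hh|].
    unfold prec. rewrite gmulKl. apply M_gprod. intros y Hy. now apply Hl; right.
Qed.

Lemma gcd_Delta_nontrivial x d : M x -> x <> gone -> gcdM d x Delta -> d <> gone.
Proof.
  intros Mx Hx [Md [_ [_ Hd]]] ->.
  destruct (nontrivial_simple_prefix x Mx Hx) as [s [[Ms HsD] [Hs Hsx]]].
  apply Hs, M_unit_trivial; [exact Ms|].
  pose proof (Hd s Ms Hsx HsD) as Hs1. unfold prec in Hs1. now rewrite gmul1r in Hs1.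
Qed.

Lemma Ssum_prefix_exists a v x : Csum G M Delta a v -> Csum G M Delta a (gconj G x v) ->
  M x -> x <> gone -> exists t, Ssum G M Delta a v t /\ P t x.
Proof.
  intros Hv Hxv Mx Hx.
  destruct (gcd_exists x Delta Mx HD) as [d Hd]. pose proof Hd as [Md [Hdx [HdD _]]].
  destruct HL as [L HLs].
  destruct (finite_minimal_exists P prec_trans prec_antisym L
              (fun t => Ssum_cand G M Delta a v t /\ P t x)) as [t [[Ht Htx] Hmin]].
  - intros t [[[Mt HtD] _] _]. apply HLs; [exact Mt | now apply ldiv_prec].
  - exists d. refine (conj (conj (conj Md HdD) (conj _ _)) Hdx).
    + exact (gcd_Delta_nontrivial x d Mx Hx Hd).
    + exact (Csum_gconj_gcd_Delta a v x d Hv Hxv Mx Hd).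
  - exists t. split; [split; [exact Ht|] | exact Htx].
    intros t' Ht' Ht't. apply Hmin; [split; [exact Ht' | eapply prec_trans; eauto] | exact Ht't].
Qed.

Lemma atom_bound_0 x : M x -> atom_bound x 0 -> x = gone.
Proof.
  intros Mx Hx. apply NNPP. intro Hne.
  assert (length [x] <= 0)%nat; [|simpl in *; lia].
  apply Hx; [intros y [<-|[]]; auto | apply gmul1r].
Qed.

Lemma atom_bound_ldiv t x n : M t -> t <> gone -> atom_bound x (S n) -> atom_bound (t^-1 * x) n.
Proof.
  intros Mt Ht Hx l Hl El.
  assert (length (t :: l) <= S n)%nat; [|simpl in *; lia].
  apply Hx; [intros y [<-|Hy]; auto | simpl; rewrite El; apply gmulKr].
Qed.

(* Peel off, one arrow at a time, a minimal simple prefix of the positive conjugator; the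
   atomicity bound decreases at each step. *)
Lemma walk_of_positive_conjugator a n : forall x v, M x -> atom_bound x n ->
  Csum G M Delta a v -> Csum G M Delta a (gconj G x v) ->
  exists l, walk G M Delta a v l (gconj G x v) /\ label_prod G l = x.
Proof.
  induction n as [|n IH]; intros x v Mx Hx Hv Hxv;
    (destruct (classic (x = gone)) as [->|Hne];
     [exists []; simpl; split; [now rewrite gconj_one | reflexivity]|]).
  - exfalso. exact (Hne (atom_bound_0 x Mx Hx)).
  - destruct (Ssum_prefix_exists a v x Hv Hxv Mx Hne) as [t [Ht Htx]].
    pose proof Ht as [[[Mt _] [Ht1 Htv]] _].
    assert (E : gconj G (t^-1 * x) (gconj G t v) = gconj G x v)
      by (now rewrite <- gconj_mul, gmulKr).
    destruct (IH (t^-1 * x) (gconj G t v)) as [l [Hw Hl]];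
      [exact Htx | exact (atom_bound_ldiv t x n Mt Ht1 Hx) | exact Htv | now rewrite E |].
    exists ((v, t, true) :: l). simpl. rewrite E in Hw.
    split; [exact (conj (conj Hv Ht) (conj eq_refl Hw)) | now rewrite Hl, gmulKr].
Qed.

(* Write [c = Delta^-n * m] with [m] positive and route through [v^(Delta^-n)]. *)
Lemma walk_of_conjugator a v c : Csum G M Delta a v -> Csum G M Delta a (gconj G c v) ->
  exists l, walk G M Delta a v l (gconj G c v) /\ label_prod G l = c.
Proof.
  intros Hv Hcv. destruct (Delta_power_mul_in_M c) as [n Hm].
  set (w := gconj G (Dn n)^-1 v).
  assert (Hw : Csum G M Delta a w)
    by (unfold w; rewrite <- gzpow_of_nat, <- gzpow_opp; now apply Csum_gconj_gzpow).
  assert (E1 : gconj G (Dn n) w = v) by (unfold w; gnorm; reflexivity).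
  assert (E2 : gconj G (Dn n * c) w = gconj G c v) by (unfold w; gnorm; reflexivity).
  destruct (Hatom _ (M_gpow n)) as [N1 HN1].
  destruct (walk_of_positive_conjugator a N1 (Dn n) w (M_gpow n) HN1 Hw)
    as [l1 [Hw1 Hl1]]; [now rewrite E1|].
  rewrite E1 in Hw1. destruct (walk_rev G M Delta a l1 w v Hw1) as [l1' [Hw1' Hl1']].
  destruct (Hatom _ Hm) as [N2 HN2].
  destruct (walk_of_positive_conjugator a N2 (Dn n * c) w Hm HN2 Hw)
    as [l2 [Hw2 Hl2]]; [now rewrite E2|].
  rewrite E2 in Hw2. exists (l1' ++ l2). split.
  - exact (walk_cat G M Delta a l1' l2 v w (gconj G c v) Hw1' Hw2).
  - now rewrite label_prod_cat, Hl1', Hl1, Hl2, gmulKl.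
Qed.

End Garside.

Theorem theorem3p4 (G : group) (M : G -> Prop) (Delta : G)
  (HG : is_garside G M Delta) (a a' : G) (Ha' : Csum G M Delta a a') :
  forall c : G, image_p G M Delta a a' c <-> centralizer G a' c.
Proof.
  destruct HG as (HM1 & HMmul & Hfrac & Hatom & _ & Hgcd & _ & _ & HD & Hlr & HL & Hgen).
  pose proof Ha' as (_ & (r & Hr & _) & _).
  pose proof (Delta_nontrivial G M Delta a' r Hr) as HDnt.
  intro c. unfold image_p, centralizer. split.
  - intros [l [Hw ->]]. symmetry. exact (walk_conjugates G M Delta a l a' a' Hw).
  - intro Hc.
    assert (E : gconj G c a' = a') by (unfold gconj; now rewrite <- gmulA, <- Hc, gmulKl).
    assert (Hca' : Csum G M Delta a (gconj G c a')) by now rewrite E.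
    destruct (walk_of_conjugator G M Delta HM1 HMmul Hfrac Hatom Hgcd HD Hlr HL Hgen HDnt
                a a' c Ha' Hca') as [l [Hw Hl]].
    exists l. rewrite E in Hw. auto.
Qed.
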